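(* Let $c$ be a prefix equivariant statistic, $N\ge1$ and $\theta>0$. Then there exists $k\in\{0,1,\dots,N-1\}$ such that, in the weighted game of best choice defined by $c$ and $\theta$, the positional strategy with parameter $k$ maximizes the probability of winning among all strategies.
   Context: Permutations of $\{1,\dots,m\}$ are written in one-line notation; $\mathfrak S_m$ is the set of all of them. An entry $\pi_j$ is a left-to-right maximum of $\pi$ if $\pi_j>\pi_i$ for all $i<j$. A statistic is a function $c:\bigcup_{m=1}^N\mathfrak S_m\to\mathbb Z_{\ge0}$. The weighted game of best choice is played as follows. A permutation $\pi\in\mathfrak S_N$ is chosen with probability $\theta^{c(\pi)}/\sum_{\sigma\in\mathfrak S_N}\theta^{c(\sigma)}$. For $i=1,\dots,N$, the player sees $\pi^{(i)}$, the unique element of $\mathfrak S_i$ with the same relative order as $\pi_1,\dots,\pi_i$. Based only on this, the player accepts candidate $i$ (ending the game) or rejects it; candidate $N$ is accepted if all earlier ones were rejected. The player wins iff the accepted candidate $i$ has $\pi_i=N$. A strategy is any such decision rule. The positional strategy with parameter $k$ rejects candidates $1,\dots,k$ and accepts the first candidate $i>k$ such that $\pi_i$ is a left-to-right maximum of $\pi$. Let $e_k=12\cdots k$. For $q\in\mathfrak S_k$ and $\pi\in\mathfrak S_m$ ($k\le m\le N$) with $\pi_1<\cdots<\pi_k$, $\sigma_q\cdot\pi\in\mathfrak S_m$ is given by $(\sigma_q\cdot\pi)_i=\pi_{q_i}$ for $i\le k$ and $(\sigma_q\cdot\pi)_i=\pi_i$ for $i>k$. The statistic $c$ is prefix equivariant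 if $c(\pi)-c(\sigma_q\cdot\pi)=c(e_k)-c(q)$ for all such $k,q,\pi$. Examples include the number of left-to-right maxima and the number of inversions. *)

From HB Require Import structures.
From mathcomp Require Import all_boot all_order all_algebra all_fingroup.
Set Implicit Arguments. Unset Strict Implicit. Unset Printing Implicit Defensive.
Import Order.TTheory GRing.Theory Num.Theory.

(* Conventions: a permutation of {1,...,m} is represented by pi : 'S_m, a
   permutation of {0,...,m-1}; one-line notation pi_1 ... pi_m corresponds to
   pi 0, ..., pi (m-1) (shifted down by one).  Positions are 0-based. *)

(* Build a permutation from a function; the fallback 1 is never used in the
   definitions below, since the functions passed are injective. *)
Definition mkperm n (f : 'I_n -> 'I_n) : 'S_n :=
  match @injectiveP _ _ f with
  | ReflectT H => perm H
  | ReflectF _ => 1%g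
  end.

Definition statistic := forall m : nat, 'S_m -> nat.

(* sigma_q . pi  with q in S_k and pi in S_m (k <= m): the position map
   i |-> q_i for i < k, i |-> i otherwise; (sigma_q . pi)_i = pi_(ext q i).
   In mathcomp (s * t) x = t (s x), so sigma_q . pi = ext_perm q * pi. *)
Definition ext_fun k m (q : 'S_k) (i : 'I_m) : 'I_m :=
  if insub (val i) : option 'I_k is Some j then insubd i (val (q j)) else i.

Definition ext_perm k m (q : 'S_k) : 'S_m := mkperm (@ext_fun k m q).

Definition sigma_act k m (q : 'S_k) (pi : 'S_m) : 'S_m := (ext_perm m q * pi)%g.

Definition incr_prefix k m (pi : 'S_m) : Prop :=
  forall i j : 'I_m, i < j -> j < k -> pi i < pi j.

(* prefix equivariance, required on the domain of the statistic: sizes <= N *)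
Definition prefix_equivariant (N : nat) (c : statistic) : Prop :=
  forall (k m : nat) (q : 'S_k) (pi : 'S_m),
    0 < k -> k <= m -> m <= N -> incr_prefix k pi ->
    ((c m pi)%:Z - (c m (sigma_act q pi))%:Z = (c k 1%g)%:Z - (c k q)%:Z)%R.

(* pi^(i+1): the standardization of the first i+1 entries pi 0 .. pi i
   (relative rank among them), as an element of 'S_(i.+1). *)
Definition std_fun n (pi : 'S_n) (i : nat) (j : 'I_i.+1) : 'I_i.+1 :=
  inord #|[pred l : 'I_n | (l <= i) &&
            [exists p : 'I_n, (val p == val j) && (pi l < pi p)]]|.

Definition std n (pi : 'S_n) (i : nat) : 'S_i.+1 := mkperm (@std_fun n pi i).

(* A strategy: at (0-based) candidate i, decides (true = accept) based only on
   pi^(i+1). *)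
Definition strategy := forall i : nat, 'S_i.+1 -> bool.

(* 0-based index of the accepted candidate: first i < N-1 accepted,
   otherwise the last candidate N-1. *)
Definition stop_time N (s : strategy) (pi : 'S_N) : nat :=
  find (fun i => s i (std pi i)) (iota 0 N.-1).

Definition wins N (s : strategy) (pi : 'S_N) : bool :=
  [exists i : 'I_N, (val i == stop_time s pi) && (val (pi i) == N.-1)].

Definition win_prob (R : realFieldType) (theta : R) (c : statistic) N
    (s : strategy) : R :=
  ((\sum_(pi : 'S_N | wins s pi) theta ^+ (c N pi)) /
   (\sum_(pi : 'S_N) theta ^+ (c N pi)))%R.

(* Positional strategy with parameter k: reject candidates 1..k (0-based
   i < k), then accept the first left-to-right maximum, i.e. the current
   entry is the largest of pi^(i+1). *)
Definition positional (k : nat) : strategy :=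
  fun i sigma => (k <= i) && (sigma ord_max == ord_max).

From HB Require Import structures.
From mathcomp Require Import all_boot all_order all_algebra all_fingroup.
From mathcomp Require Import zify ring lra.
Set Implicit Arguments. Unset Strict Implicit. Unset Printing Implicit Defensive.
Import Order.TTheory GRing.Theory Num.Theory.

(* Write N = n+1 and P for the theta^c-weighted measure on
   'S_N.  The proof is a backward induction resting on one probabilistic fact
   (mass_indep): for t < N, an event determined by the standardization
   pi^(t+1) of the first t+1 entries is independent under P of any event
   invariant under reordering those entries.  It holds because prefix
   equivariance makes the weight of sigma_q.pi differ from that of pi by a
   factor depending only on q and pi^(t+1) (weight_shift).

   With p t = P(maximum seen by
   t), a t = P(t is a record) and the backward value
   V t = a t * max (p t) (V (t+1)) + (1 - a t) * V (t+1),  V N = 0,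
   every strategy wins with probability at most V 0 (win_mass_le), and the
   positional strategy with threshold k = min {t | V (t+1) <= p t} attains it
   (win_mass_positional), because p increases and V decreases. *)

Lemma down_ind (Q : nat -> Prop) n :
  Q n -> (forall t, t < n -> Q t.+1 -> Q t) -> forall t, t <= n -> Q t.
Proof.
move=> Qn IH t ht; rewrite -(subKn ht).
elim: (n - t) (leq_subr t n) => [|d IHd] hd; first by rewrite subn0.
by apply: IH; [lia | rewrite (_ : (n - d.+1).+1 = n - d); [apply: IHd|]; lia].
Qed.

Lemma mkpermE n (f : 'I_n -> 'I_n) : injective f -> mkperm f =1 f.
Proof.
move=> inj x; rewrite /mkperm; case: injectiveP => H; first by rewrite permE.
by case: H.
Qed.

Lemma card_ord_lt n m : m <= n -> #|[pred l : 'I_n | l < m]| = m.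
Proof.
move=> hmn.
have inj : injective (fun j : 'I_m => widen_ord hmn j).
  by move=> a b /(congr1 val) /= /val_inj.
rewrite -[RHS](card_ord m) -(card_image inj).
apply: eq_card => x /=; rewrite inE /=; apply/idP/idP.
  by move=> hx; apply/imageP; exists (Ordinal hx) => //; apply: val_inj.
by case/imageP => y _ ->; rewrite /= ltn_ord.
Qed.

Lemma perm_rank m (t : 'S_m) a : val (t a) = #|[pred b | t b < t a]|.
Proof.
rewrite -[RHS](card_image (@perm_inj _ t)).
rewrite -[LHS](card_ord_lt (ltnW (ltn_ord (t a)))).
apply: eq_card => x /=; rewrite !inE /=; apply/idP/idP.
  by move=> hx; apply/imageP; exists (t^-1 x)%g; rewrite ?inE /= permKV.
by case/imageP => y; rewrite inE => hy ->.
Qed.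

Lemma perm_order_inj m (t1 t2 : 'S_m) :
  (forall a b, (t1 a < t1 b) = (t2 a < t2 b)) -> t1 = t2.
Proof.
move=> h; apply/permP => a; apply: val_inj.
by rewrite (perm_rank t1) (perm_rank t2); apply: eq_card => b; rewrite !inE /= h.
Qed.

Lemma perm_top m (s : 'S_m.+1) x :
  (s x == ord_max) = [forall y, (y != x) ==> (s y < s x)].
Proof.
apply/eqP/forallP => [h y|h].
  apply/implyP => hy; rewrite h ltn_neqAle -ltnS ltn_ord andbT.
  by rewrite -h (inj_eq val_inj) (inj_eq (@perm_inj _ s)).
case: (eqVneq (s^-1 ord_max)%g x) => [<-|hy]; first by rewrite permKV.
by move: (implyP (h _) hy); rewrite permKV ltnNge -ltnS ltn_ord.
Qed.

Section Standardization.
Variables (n : nat) (pi : 'S_n) (i : nat) (hi : i < n).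

Definition prefix_rank (x : 'I_n) := #|[pred l : 'I_n | (l <= i) && (pi l < pi x)]|.

Lemma prefix_rank_le (x : 'I_n) : x <= i -> prefix_rank x <= i.
Proof.
move=> hx; have := card_ord_lt hi.
rewrite (cardD1 x) inE /= ltnS hx /= add1n => -[<-].
apply: subset_leq_card; apply/subsetP => l; rewrite !inE /= => /andP[hl h].
by rewrite ltnS hl andbT; apply/eqP => e; move: h; rewrite e ltnn.
Qed.

Lemma prefix_rank_mono (x y : 'I_n) :
  x <= i -> y <= i -> pi x < pi y -> prefix_rank x < prefix_rank y.
Proof.
move=> hx hy hxy.
rewrite /prefix_rank (cardD1 x [pred l : 'I_n | (l <= i) && (pi l < pi y)]).
rewrite inE /= hx hxy add1n ltnS; apply: subset_leq_card; apply/subsetP => l.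
rewrite !inE /= => /andP[hl h]; rewrite (ltn_trans h hxy) hl !andbT.
by apply/eqP => e; move: h; rewrite e ltnn.
Qed.

Definition emb (a : 'I_i.+1) : 'I_n := widen_ord hi a.

Lemma emb_le (a : 'I_i.+1) : emb a <= i.
Proof. by rewrite /= -ltnS. Qed.

Lemma std_fun_val (a : 'I_i.+1) : val (@std_fun n pi i a) = prefix_rank (emb a).
Proof.
rewrite /std_fun (_ : #|_| = prefix_rank (emb a)).
  by apply: inordK; rewrite ltnS prefix_rank_le ?emb_le.
apply: eq_card => l; rewrite !inE; congr (_ && _).
apply/existsP/idP => [[p /andP[/eqP hp h]]|h]; last by exists (emb a); rewrite eqxx.
by have -> : emb a = p by apply: val_inj; rewrite /= hp.
Qed.

Lemma std_fun_lt (a b : 'I_i.+1) :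
  (@std_fun n pi i a < @std_fun n pi i b) = (pi (emb a) < pi (emb b)).
Proof.
rewrite !std_fun_val.
case: (ltngtP (pi (emb a)) (pi (emb b))) => h.
- by rewrite prefix_rank_mono ?emb_le.
- by apply/negbTE; rewrite -leqNgt ltnW // prefix_rank_mono ?emb_le.
- have /perm_inj -> : pi (emb a) = pi (emb b) by apply: val_inj.
  by rewrite !ltnn.
Qed.

Lemma std_fun_inj : injective (@std_fun n pi i).
Proof.
move=> a b e; apply/eqP; apply: contraT => hab.
have : pi (emb a) != pi (emb b).
  by rewrite (inj_eq (@perm_inj _ _)); apply: contra hab => /eqP [/val_inj ->].
by rewrite neq_ltn -!std_fun_lt e ltnn.
Qed.

Lemma std_lt (a b : 'I_i.+1) : (std pi i a < std pi i b) = (pi (emb a) < pi (emb b)).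
Proof. by rewrite /std !mkpermE ?std_fun_lt //; apply: std_fun_inj. Qed.

Lemma std_unique (t : 'S_i.+1) :
  (forall a b, (t a < t b) = (pi (emb a) < pi (emb b))) -> std pi i = t.
Proof. by move=> h; apply: perm_order_inj => a b; rewrite std_lt h. Qed.

Lemma embP (x : 'I_n) : x <= i -> {a : 'I_i.+1 | x = emb a}.
Proof. by move=> hx; exists (Ordinal (hx : x < i.+1)); apply: val_inj. Qed.

End Standardization.

Lemma std_std n (pi : 'S_n) i j (hi : i < n) (hj : j < n) (hji : j < i.+1) :
  std (std pi i) j = std pi j.
Proof.
symmetry; apply: (std_unique (hi := hj)) => a b.
rewrite (std_lt _ hji) (std_lt _ hi).
have e c : emb hi (emb hji c) = emb hj c by apply: val_inj.
by rewrite !e.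
Qed.

Section PrefixAction.
Variables (n i : nat) (hi : i < n).

Lemma ext_fun_emb (q : 'S_i.+1) (a : 'I_i.+1) :
  @ext_fun _ n q (emb hi a) = emb hi (q a).
Proof.
rewrite /ext_fun; case: insubP => [j hj hv | ]; last by rewrite /= ltn_ord.
have -> : j = a by apply: val_inj; rewrite hv.
by apply: val_inj; rewrite /= insubdK //; apply: leq_trans (ltn_ord _) hi.
Qed.

Lemma ext_fun_out (q : 'S_i.+1) (x : 'I_n) : i < x -> @ext_fun _ n q x = x.
Proof.
move=> hx; rewrite /ext_fun; case: insubP => [j hj hv | ] //.
by move: hj; rewrite ltnS leqNgt hx.
Qed.

Lemma ext_fun_inj (q : 'S_i.+1) : injective (@ext_fun _ n q).
Proof.
have out (a : 'I_i.+1) (y : 'I_n) : i < y -> emb hi (q a) != y.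
  by move=> hy; rewrite neq_ltn /= (leq_ltn_trans _ hy) // -ltnS.
move=> x y; case: (leqP x i) => hx; case: (leqP y i) => hy.
- case: (embP hi hx) => a ->; case: (embP hi hy) => b ->.
  by rewrite !ext_fun_emb => /(congr1 val) /= /val_inj /perm_inj ->.
- case: (embP hi hx) => a ->; rewrite ext_fun_emb ext_fun_out // => e.
  by move: (out a y hy); rewrite e eqxx.
- case: (embP hi hy) => a ->; rewrite ext_fun_emb ext_fun_out // => e.
  by move: (out a x hx); rewrite e eqxx.
- by rewrite !ext_fun_out.
Qed.

Lemma ext_emb (q : 'S_i.+1) (a : 'I_i.+1) : ext_perm n q (emb hi a) = emb hi (q a).
Proof. by rewrite mkpermE ?ext_fun_emb //; apply: ext_fun_inj. Qed.

Lemma ext_out (q : 'S_i.+1) (x : 'I_n) : i < x -> ext_perm n q x = x.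
Proof. by move=> hx; rewrite mkpermE ?ext_fun_out //; apply: ext_fun_inj. Qed.

Lemma ext_le (q : 'S_i.+1) (x : 'I_n) : (ext_perm n q x <= i) = (x <= i).
Proof.
case: (leqP x i) => hx; last by rewrite ext_out // leqNgt hx.
by case: (embP hi hx) => a ->; rewrite ext_emb !emb_le.
Qed.

Lemma ext_permM (q1 q2 : 'S_i.+1) :
  ext_perm n (q1 * q2)%g = (ext_perm n q1 * ext_perm n q2)%g.
Proof.
apply/permP => x; rewrite permM.
case: (leqP x i) => hx; last by rewrite !ext_out.
by case: (embP hi hx) => a ->; rewrite !ext_emb permM.
Qed.

Lemma ext_perm1 : ext_perm n (1 : 'S_i.+1)%g = 1%g.
Proof.
apply/permP => x; rewrite perm1.
case: (leqP x i) => hx; last by rewrite ext_out.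
by case: (embP hi hx) => a ->; rewrite ext_emb perm1.
Qed.

Lemma ext_permKV (q : 'S_i.+1) x : ext_perm n q (ext_perm n (q^-1)%g x) = x.
Proof. by rewrite -permM -ext_permM mulVg ext_perm1 perm1. Qed.

Lemma std_ext (q : 'S_i.+1) (pi : 'S_n) :
  std (ext_perm n q * pi)%g i = (q * std pi i)%g.
Proof.
by apply: (std_unique (hi := hi)) => a b; rewrite !permM (std_lt _ hi) !ext_emb.
Qed.

End PrefixAction.

Lemma std1_incr_prefix n (rho : 'S_n) i (hi : i < n) :
  std rho i = 1%g -> incr_prefix i.+1 rho.
Proof.
move=> h x y hxy hy.
have hx : x <= i by rewrite -ltnS (ltn_trans hxy) .
case: (embP hi hx) => a ea; case: (embP hi (hy : y <= i)) => b eb.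
by rewrite ea eb -(std_lt rho hi) h !perm1; move: hxy; rewrite ea eb.
Qed.

(* Prefix equivariance, applied to the sorted-prefix representative of pi:
   reordering the prefix of pi by q changes c by the change of c from
   pi^(i+1) to q * pi^(i+1). *)
Lemma weight_shift (c : statistic) n (hPE : prefix_equivariant n c) i
    (hi : i < n) (q : 'S_i.+1) (pi : 'S_n) :
  c n (ext_perm n q * pi)%g + c i.+1 (std pi i) =
  c n pi + c i.+1 (q * std pi i)%g.
Proof.
set s := std pi i; set rho := (ext_perm n (s^-1)%g * pi)%g.
have inc : incr_prefix i.+1 rho.
  by apply: (std1_incr_prefix hi); rewrite /rho (std_ext hi) mulVg.
have e1 : sigma_act s rho = pi.
  by rewrite /sigma_act /rho mulgA -(ext_permM hi) mulgV (ext_perm1 hi) mul1g.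
have e2 : sigma_act (q * s)%g rho = (ext_perm n q * pi)%g.
  by rewrite /sigma_act /rho mulgA -(ext_permM hi) -mulgA mulgV mulg1.
have := hPE i.+1 n s rho (ltn0Sn i) hi (leqnn n) inc.
have := hPE i.+1 n (q * s)%g rho (ltn0Sn i) hi (leqnn n) inc.
rewrite e1 e2; lia.
Qed.

Definition prefix_invariant n i (E : pred 'S_n) :=
  forall (q : 'S_i.+1) pi, E (ext_perm n q * pi)%g = E pi.
Definition prefix_determined n i (B : pred 'S_n) :=
  forall pi pi', std pi i = std pi' i -> B pi = B pi'.

Section PrefixClasses.
Variable m : nat.
Local Notation det := (@prefix_determined m).
Local Notation inv := (@prefix_invariant m).

Lemma det_mono i j (B : pred 'S_m) : det i B -> i <= j -> j < m -> det j B.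
Proof.
move=> hB hij hj pi pi' e; apply: hB.
have him : i < m by apply: leq_ltn_trans hj.
by rewrite -(std_std pi hj him hij) -(std_std pi' hj him hij) e.
Qed.

Lemma det_and t (A B : pred 'S_m) : det t A -> det t B ->
  det t (fun pi => A pi && B pi).
Proof. by move=> hA hB pi pi' e; rewrite (hA _ _ e) (hB _ _ e). Qed.

Lemma det_decision (s : strategy) t : det t (fun pi : 'S_m => s t (std pi t)).
Proof. by move=> pi pi' ->. Qed.

Lemma inv_not t (E : pred 'S_m) : inv t E -> inv t (fun pi => ~~ E pi).
Proof. by move=> h q pi; rewrite h. Qed.

End PrefixClasses.

Section Events.
Variable n : nat.
Local Notation N := n.+1.
Implicit Types (pi : 'S_N) (s : strategy).

Definition record t : pred 'S_N :=
  fun pi => [forall l : 'I_N, (l < t) ==> (pi l < pi (inord t))].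
Definition top_seen t : pred 'S_N :=
  fun pi => [exists l : 'I_N, (l <= t) && (val (pi l) == n)].
Definition running s t : pred 'S_N :=
  fun pi => all (fun j => ~~ s j (std pi j)) (iota 0 t).

Lemma runningS s t pi : running s t.+1 pi = running s t pi && ~~ s t (std pi t).
Proof. by rewrite /running -[t.+1]addn1 iotaD all_cat /= andbT. Qed.

Lemma stop_at s t pi : t < n -> running s t pi -> s t (std pi t) ->
  stop_time s pi = t.
Proof.
move=> ht hrun hs; rewrite /stop_time /=.
have -> : iota 0 n = iota 0 t ++ iota t (n - t) by rewrite -iotaD subnKC // ltnW.
rewrite find_cat size_iota.
have -> : has (fun j => s j (std pi j)) (iota 0 t) = false.
  by apply/negbTE; rewrite -all_predC.
case e : (n - t) => [|d]; first by move: ht; rewrite -subn_gt0 e.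
by rewrite /= hs addn0.
Qed.

Lemma stop_last s pi : running s n pi -> stop_time s pi = n.
Proof.
by move=> hrun; rewrite /stop_time -[RHS](size_iota 0 n); apply: hasNfind; rewrite -all_predC.
Qed.

Lemma wins_at s pi t : stop_time s pi = t -> t <= n ->
  wins s pi = (val (pi (inord t)) == n).
Proof.
move=> hst ht; rewrite /wins hst; apply/existsP/idP => [[i /andP[/eqP hi h]]|h].
  by have <- : i = inord t by apply: val_inj; rewrite /= inordK.
by exists (inord t); rewrite /= inordK // eqxx.
Qed.

Lemma top_iff t pi : t <= n ->
  (val (pi (inord t)) == n) = record t pi && top_seen t pi.
Proof.
move=> ht; apply/idP/andP => [/eqP h|[/forallP hL /existsP [l /andP [hl /eqP hv]]]].
  split; last by apply/existsP; exists (inord t); rewrite inordK // leqnn h eqxx.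
  apply/forallP => l; apply/implyP => hl; rewrite h.
  have := ltn_ord (pi l); rewrite ltnS leq_eqVlt => /orP [/eqP e|//].
  have /perm_inj e' : pi l = pi (inord t) by apply: val_inj; rewrite /= e h.
  by move: hl; rewrite e' inordK // ltnn.
case: (ltngtP l t) => hlt.
- by move: (implyP (hL l) hlt); rewrite hv ltnNge -ltnS ltn_ord.
- by move: hl; rewrite leqNgt hlt.
- have -> : inord t = l by apply: val_inj; rewrite /= inordK // hlt.
  by rewrite hv.
Qed.

Lemma record_std t pi (ht : t < N) :
  record t pi = (std pi t ord_max == ord_max).
Proof.
have em : emb ht ord_max = inord t by apply: val_inj; rewrite /= inordK.
have below (a : 'I_t.+1) : (a != ord_max) = (a < t).
  by rewrite -(inj_eq val_inj) /= ltn_neqAle -ltnS ltn_ord andbT.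
rewrite perm_top; apply/forallP/forallP => h a; apply/implyP.
  by rewrite below => ha; rewrite (std_lt pi ht) em (implyP (h _)).
move=> hl; case: (embP ht (ltnW hl)) => b eb; move: hl.
by rewrite eb -em -(std_lt pi ht) => hl; rewrite (implyP (h b)) // below.
Qed.

Lemma top_seen_last pi : top_seen n pi.
Proof.
apply/existsP; exists ((pi^-1)%g ord_max).
by rewrite -ltnS ltn_ord permKV eqxx.
Qed.

Lemma top_seenS t pi : top_seen t pi -> top_seen t.+1 pi.
Proof.
move/existsP => [l /andP [hl h]]; apply/existsP; exists l.
by rewrite h (leq_trans hl).
Qed.

End Events.

Section EventClasses.
Variable n : nat.
Local Notation N := n.+1.
Local Notation det := (@prefix_determined N).
Local Notation inv := (@prefix_invariant N).

Lemma det_record t : t < N -> det t (record t : pred 'S_N).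
Proof. by move=> ht pi pi' e; rewrite !(record_std _ ht) e. Qed.

Lemma det_running s t : t < N -> det t (running s t : pred 'S_N).
Proof.
move=> ht pi pi' e; apply: eq_in_all => j; rewrite mem_iota add0n => /andP [_ hj].
by rewrite (det_mono (det_decision s (t := j)) (ltnW hj) ht e).
Qed.

Lemma det_runningS s t : t < n -> det t (running s t.+1 : pred 'S_N).
Proof.
move=> ht; have htN : t < N by apply: ltnW.
by move=> pi pi' e; rewrite !runningS (det_running s htN e) (det_decision s e).
Qed.

Lemma inv_top_seen t : t < N -> inv t (top_seen t : pred 'S_N).
Proof.
move=> ht q pi; apply/existsP/existsP => [[l /andP [hl h]]|[l /andP [hl h]]].
  by exists (ext_perm N q l); rewrite (ext_le ht) hl -permM.
by exists (ext_perm N (q^-1)%g l); rewrite (ext_le ht) hl permM (ext_permKV ht).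
Qed.

Lemma inv_record t : t < n -> inv t (record t.+1 : pred 'S_N).
Proof.
move=> ht; have htN : t < N by apply: ltnW.
have fix_next (q : 'S_t.+1) : ext_perm N q (inord t.+1) = inord t.+1.
  by rewrite (ext_out htN) // inordK.
move=> q pi; apply/forallP/forallP => h l; apply/implyP => hl.
  have := implyP (h (ext_perm N (q^-1)%g l)); rewrite !permM fix_next (ext_permKV htN).
  by apply; rewrite ltnS (ext_le htN).
by rewrite !permM fix_next; apply: (implyP (h _)); rewrite ltnS (ext_le htN) -ltnS.
Qed.

End EventClasses.

Local Open Scope ring_scope.

Section Mass.
Variables (R : realFieldType) (theta : R) (htheta : 0 < theta) (c : statistic)
  (n : nat) (hPE : prefix_equivariant n c).

Definition weight (pi : 'S_n) : R := theta ^+ c pi.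
Definition mass (A : pred 'S_n) : R := \sum_(pi | A pi) weight pi.
Definition fibre_mass i (s : 'S_i.+1) (E : pred 'S_n) : R :=
  \sum_(pi | (std pi i == s) && E pi) weight pi.

Lemma weight_ge0 pi : 0 <= weight pi.
Proof. by rewrite exprn_ge0 // ltW. Qed.

Lemma mass_ge0 A : 0 <= mass A.
Proof. by apply: sumr_ge0 => pi _; apply: weight_ge0. Qed.

Lemma mass_ext (A A' : pred 'S_n) : A =1 A' -> mass A = mass A'.
Proof. by move=> h; apply: eq_bigl. Qed.

(* The fibre masses of a prefix invariant event are proportional to
   theta^(c s): reindex by the prefix action of s2 * s1^-1. *)
Lemma fibre_mass_ratio i (hi : (i < n)%N) E (hE : prefix_invariant i E)
    (s1 s2 : 'S_i.+1) :
  theta ^+ c s1 * fibre_mass s2 E = theta ^+ c s2 * fibre_mass s1 E.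
Proof.
set q := (s2 * s1^-1)%g.
have fibre (pi : 'S_n) : (q * std pi i == s2)%g = (std pi i == s1).
  by apply/eqP/eqP => [h|->]; [apply: (mulgI q); rewrite h /q mulgKV | rewrite /q mulgKV].
rewrite /fibre_mass (reindex_inj (mulgI (ext_perm n q))) /= !mulr_sumr.
apply: eq_big => [pi|pi /andP[hs _]]; first by rewrite hE (std_ext hi) fibre.
rewrite (std_ext hi) fibre in hs; rewrite /weight -!exprD; congr (_ ^+ _).
by have := weight_shift hPE hi q pi; rewrite (eqP hs) /q mulgKV addnC => ->; rewrite addnC.
Qed.

Lemma mass_fibres i (E : pred 'S_n) : mass E = \sum_(s : 'S_i.+1) fibre_mass s E.
Proof.
rewrite /mass (partition_big (fun pi => std pi i) predT) //=.
by apply: eq_bigr => s _; apply: eq_bigl => pi; rewrite andbC.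
Qed.

Lemma mass_fibres_det i (B F : pred 'S_n) (hB : prefix_determined i B) :
  mass (fun pi => B pi && F pi) =
  \sum_(s : 'S_i.+1 | [exists pi, (std pi i == s) && B pi]) fibre_mass s F.
Proof.
rewrite /mass (partition_big (fun pi => std pi i) predT) //= [RHS]big_mkcond /=.
apply: eq_bigr => s _; case: ifP => [/existsP[pi0 /andP[/eqP h0 hb0]] | hn].
  apply: eq_bigl => pi; case: (boolP (std pi i == s)) => /= [/eqP hs|_].
    by rewrite andbT (hB pi pi0) ?hb0 // hs h0.
  by rewrite andbF.
apply: big_pred0 => pi; apply: contraFF hn => /andP[/andP[hb _] hs].
by apply/existsP; exists pi; rewrite hs hb.
Qed.

(* Independence with denominators cleared: expand both sides over pairs of
   fibres and compare them with fibre_mass_ratio for E and for the sure event. *)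
Lemma mass_indep_mul i (hi : (i < n)%N) (B E : pred 'S_n)
    (hB : prefix_determined i B) (hE : prefix_invariant i E) :
  mass (fun pi => B pi && E pi) * mass predT = mass B * mass E.
Proof.
have eB : mass B = mass (fun pi => B pi && true) by apply: mass_ext => pi; rewrite andbT.
rewrite eB !(mass_fibres_det _ hB) (mass_fibres i xpredT) (mass_fibres i E).
rewrite !big_distrl /=; apply: eq_bigr => s _.
rewrite !big_distrr /=; apply: eq_bigr => t _.
have hT : prefix_invariant i (xpredT : pred 'S_n) by [].
have a1 := fibre_mass_ratio hi hE s t.
have a2 := fibre_mass_ratio hi hT s t.
apply: (mulfI (expf_neq0 (c t) (lt0r_neq0 htheta))).
by rewrite !mulrA -a1 -a2 -!mulrA [fibre_mass t _ * _]mulrC.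
Qed.

Lemma mass_total_gt0 : 0 < mass predT.
Proof.
rewrite /mass (bigD1 1%g) //=.
rewrite ltr_pwDl ?exprn_gt0 //; apply: sumr_ge0 => pi _; exact: weight_ge0.
Qed.

Lemma mass_split (A F : pred 'S_n) :
  mass A = mass (fun pi => A pi && F pi) + mass (fun pi => A pi && ~~ F pi).
Proof. exact: bigID. Qed.

Lemma mass0 (A : pred 'S_n) : A =1 xpred0 -> mass A = 0.
Proof. exact: big_pred0. Qed.

Lemma mass_le (A A' : pred 'S_n) : (forall pi, A pi -> A' pi) -> mass A <= mass A'.
Proof.
move=> h; rewrite (mass_split A' A) (_ : mass (fun pi => A' pi && A pi) = mass A).
  by rewrite lerDl mass_ge0.
by apply: mass_ext => pi; case: (boolP (A pi)) => hA; rewrite ?andbT ?andbF // h.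
Qed.

Lemma mass_compl (E : pred 'S_n) :
  mass (fun pi => ~~ E pi) / mass predT = 1 - mass E / mass predT.
Proof.
have hZ := lt0r_neq0 mass_total_gt0.
have e := mass_split predT E.
have e1 : mass (fun pi => predT pi && E pi) = mass E by apply: mass_ext.
have e2 : mass (fun pi => predT pi && ~~ E pi) = mass (fun pi => ~~ E pi).
  by apply: mass_ext.
by rewrite e1 e2 in e; rewrite e; field; rewrite -e.
Qed.

Lemma mass_indep i (hi : (i < n)%N) (B E : pred 'S_n)
    (hB : prefix_determined i B) (hE : prefix_invariant i E) :
  mass (fun pi => B pi && E pi) = mass B * (mass E / mass predT).
Proof.
by rewrite mulrA -(mass_indep_mul hi hB hE) mulfK // lt0r_neq0 // mass_total_gt0.
Qed.

End Mass.

Arguments mass_split {R theta c n} A F.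

Section Game.
Variables (R : realFieldType) (theta : R) (htheta : 0 < theta) (c : statistic)
  (n : nat) (hPE : prefix_equivariant n.+1 c).
Local Notation N := n.+1.
Local Notation P := (@mass R theta c N).
Local Notation Z := (P predT).

Lemma total_gt0 : 0 < Z.
Proof. exact: mass_total_gt0. Qed.

Definition p_top t := P (top_seen t) / Z.
Definition p_rec t := P (record t) / Z.

(* value_from r t: optimal winning probability with r candidates left,
   starting at candidate t, given that the game is still running. *)
Fixpoint value_from (r t : nat) : R :=
  if r is r'.+1 then
    p_rec t * Num.max (p_top t) (value_from r' t.+1) +
    (1 - p_rec t) * value_from r' t.+1
  else 0.

Definition value t := value_from (N - t) t.
(* Value of seeing a record at t: stop, or continue. *)
Definition best t := Num.max (p_top t) (value t.+1).

Lemma valueE t : (t <= n)%N -> value t = p_rec t * best t + (1 - p_rec t) * value t.+1.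
Proof. by move=> ht; rewrite /value /best subSn. Qed.

Lemma value_out t : (n < t)%N -> value t = 0.
Proof. by move=> ht; rewrite /value (eqP (_ : N - t == 0)%N) // subn_eq0. Qed.

Lemma p_top_ge0 t : 0 <= p_top t.
Proof. by rewrite divr_ge0 ?(mass_ge0 htheta) // ltW // total_gt0. Qed.

Lemma p_rec_ge0 t : 0 <= p_rec t.
Proof. by rewrite divr_ge0 ?(mass_ge0 htheta) // ltW // total_gt0. Qed.

Lemma p_rec_le1 t : p_rec t <= 1.
Proof. by rewrite ler_pdivrMr ?total_gt0 // mul1r; apply: (mass_le htheta). Qed.

Lemma p_top_last : p_top n = 1.
Proof.
rewrite /p_top (_ : P (top_seen n) = Z) ?divff ?lt0r_neq0 ?total_gt0 //.
by apply: mass_ext => pi; rewrite top_seen_last.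
Qed.

Lemma p_top_mono : {homo p_top : i j / (i <= j)%N >-> i <= j}.
Proof.
apply: homo_leq => [x|y x z|t]; [exact: lexx | exact: le_trans |].
apply: ler_wpM2r; first by rewrite invr_ge0 ltW // total_gt0.
by apply: (mass_le htheta) => pi; apply: top_seenS.
Qed.

Lemma value_ge0 t : 0 <= value t.
Proof.
rewrite /value; move: (N - t)%N => r; elim: r t => [|r IH] t //=.
rewrite addr_ge0 // mulr_ge0 ?p_rec_ge0 ?subr_ge0 ?p_rec_le1 //.
by rewrite le_max p_top_ge0.
Qed.

Lemma value_anti : {homo value : i j / (i <= j)%N >-> j <= i}.
Proof.
apply: homo_leq => [x|y x z hxy hyz|t]; [exact: lexx | exact: le_trans hyz hxy |].
have [ht|ht] := leqP t n; last by rewrite !value_out // ltnW.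
rewrite (valueE ht) -[X in X <= _]mul1r -[1 in X in X <= _](subrK (p_rec t)).
by rewrite addrC mulrDl lerD2r ler_wpM2l ?p_rec_ge0 // le_max lexx orbT.
Qed.

(* The optimal threshold: the first t at which stopping on a record is at
   least as good as continuing; by monotonicity stopping stays better. *)
Lemma threshold_exists : exists2 k, (k < N)%N &
  forall t, (t <= n)%N -> (value t.+1 <= p_top t) = (k <= t)%N.
Proof.
have hn : value N <= p_top n by rewrite value_out // p_top_last ler01.
have [k hk hmin] := ex_minnP (ex_intro (fun t => value t.+1 <= p_top t) n hn).
exists k; first by rewrite ltnS hmin.
move=> t ht; apply/idP/idP => [/hmin //|hkt].
apply: le_trans (value_anti (hkt : (k.+1 <= t.+1)%N)) _.
exact: le_trans hk (p_top_mono hkt).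
Qed.

Implicit Types (s : strategy) (B : pred 'S_N).
Local Notation det := (@prefix_determined N).

(* Winning mass of s from time t on the event B, and the bound it obeys:
   on a record at t one can win with probability at most best t, otherwise
   at most value (t+1). *)
Definition win_mass s t B := P (fun pi => B pi && running s t pi && wins s pi).
Definition win_bound s t B :=
  P (fun pi => B pi && running s t pi && record t pi) * best t +
  P (fun pi => B pi && running s t pi && ~~ record t pi) * value t.+1.
Definition cell s t B (rec stop : bool) :=
  P (fun pi => B pi && running s t pi && (record t pi == rec) &&
               (s t (std pi t) == stop)).

Lemma cell_ge0 s t B rec stop : 0 <= cell s t B rec stop.
Proof. exact: mass_ge0. Qed.

Lemma win_mass_last s B : win_mass s n B = win_bound s n B.
Proof.
rewrite /win_bound /best !(value_out (ltnSn n)) p_top_last (max_l ler01).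
rewrite mulr0 addr0 mulr1; apply: mass_ext => pi.
case: (boolP (running s n pi)) => hrun; last by rewrite !andbF.
by rewrite (wins_at (stop_last hrun)) // (top_iff pi (leqnn n)) top_seen_last !andbT.
Qed.

(* Stopping at t wins iff t is a record and the maximum has been seen, the
   latter being independent of the past; otherwise the game goes on. *)
Lemma win_mass_step s t B : (t < n)%N -> det t B ->
  win_mass s t B = cell s t B true true * p_top t + win_mass s t.+1 B.
Proof.
move=> ht hB; have htN : (t < N)%N by apply: ltnW.
rewrite /win_mass (mass_split _ (fun pi => s t (std pi t))); congr (_ + _).
  have hd : det t (fun pi => B pi && running s t pi && (record t pi == true) &&
                              (s t (std pi t) == true)).
    apply: det_and; last by move=> pi pi' e; rewrite e.
    apply: det_and; last by move=> pi pi' e; rewrite (det_record htN e).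
    exact: det_and hB (det_running s htN).
  rewrite /cell /p_top -(mass_indep htheta hPE htN hd (inv_top_seen htN)).
  apply: mass_ext => pi.
  case: (boolP (running s t pi)) => hrun; last by rewrite !andbF.
  case: (boolP (s t (std pi t))) => hs; last by rewrite !andbF.
  rewrite (wins_at (stop_at ht hrun hs)) ?(top_iff pi) ?(ltnW ht) //.
  by case: (B pi); case: (record t pi); case: (top_seen t pi).
apply: mass_ext => pi; rewrite runningS.
by case: (B pi); case: (running s t pi); case: (wins s pi); case: (s t (std pi t)).
Qed.

(* Whether t+1 is a record is independent of the history up to t, and
   value t.+1 = p_rec * best + (1 - p_rec) * value t.+2. *)
Lemma win_bound_step s t B : (t < n)%N -> det t B ->
  win_bound s t.+1 B = (cell s t B true false + cell s t B false false) * value t.+1.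
Proof.
move=> ht hB; have htN : (t < N)%N by apply: ltnW.
have hB' : det t (fun pi => B pi && running s t.+1 pi).
  exact: det_and hB (det_runningS s ht).
have -> : cell s t B true false + cell s t B false false =
          P (fun pi => B pi && running s t.+1 pi).
  rewrite (mass_split (fun pi => B pi && running s t.+1 pi) (record t)).
  by congr (_ + _); apply: mass_ext => pi; rewrite runningS;
    case: (record t pi); case: (s t (std pi t)); rewrite ?andbT ?andbF //= ?andbA.
rewrite /win_bound (mass_indep htheta hPE htN hB' (inv_record ht)).
rewrite (mass_indep htheta hPE htN hB' (inv_not (inv_record ht))).
by rewrite (mass_compl htheta) (valueE (ht : (t.+1 <= n)%N)) /p_rec; ring.
Qed.

Lemma win_bound_cells s t B :
  win_bound s t B = (cell s t B true true + cell s t B true false) * best t +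
                    (cell s t B false true + cell s t B false false) * value t.+1.
Proof.
rewrite /win_bound /cell.
rewrite (mass_split (fun pi => B pi && running s t pi && record t pi)
  (fun pi => s t (std pi t))).
rewrite (mass_split (fun pi => B pi && running s t pi && ~~ record t pi)
  (fun pi => s t (std pi t))).
congr ((_ + _) * _ + (_ + _) * _); apply: mass_ext => pi;
  by case: (record t pi); case: (s t (std pi t)); rewrite ?andbT ?andbF.
Qed.

(* No strategy beats the bound, by backward induction from the last
   candidate: on a record, stopping gives p_top t <= best t and continuing
   gives at most value (t+1) <= best t. *)
Lemma win_mass_le s t B : (t <= n)%N -> det t B -> win_mass s t B <= win_bound s t B.
Proof.
move=> ht0; move: B; apply: (@down_ind (fun t =>
  forall B, det t B -> win_mass s t B <= win_bound s t B) n) t ht0.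
  by move=> B _; rewrite win_mass_last.
move=> t ht IH B hB.
have := IH B (det_mono hB (leqnSn t) ht); rewrite win_bound_step // => hIH.
rewrite win_mass_step // win_bound_cells.
have hp : p_top t <= best t by rewrite le_max lexx.
have hv : value t.+1 <= best t by rewrite le_max lexx orbT.
have := value_ge0 t.+1.
have := cell_ge0 s t B true true; have := cell_ge0 s t B true false.
have := cell_ge0 s t B false true; have := cell_ge0 s t B false false.
nra.
Qed.

Lemma cell_positional k t B rec stop : (t < N)%N -> stop != (k <= t)%N && rec ->
  cell (positional k) t B rec stop = 0.
Proof.
move=> ht hne; apply: mass0 => pi /=; apply/negbTE/negP.
move=> /andP[/andP[_ /eqP hr] /eqP hs]; move: hne.
by rewrite -hs -hr /positional -(record_std pi ht) eqxx.
Qed.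

Lemma win_mass_positional k :
  (forall t, (t <= n)%N -> (value t.+1 <= p_top t) = (k <= t)%N) ->
  forall t B, (t <= n)%N -> det t B ->
  win_mass (positional k) t B = win_bound (positional k) t B.
Proof.
move=> hk t B ht0; move: B; apply: (@down_ind (fun t => forall B, det t B ->
  win_mass (positional k) t B = win_bound (positional k) t B) n) t ht0.
  by move=> B _; rewrite win_mass_last.
move=> t ht IH B hB.
have htN : (t < N)%N by apply: ltnW.
have htn : (t <= n)%N by apply: ltnW.
rewrite win_mass_step // win_bound_cells (IH B (det_mono hB (leqnSn t) ht)).
rewrite win_bound_step // /best.
have z_late : cell (positional k) t B false true = 0.
  by apply: cell_positional => //; rewrite andbF.
case: (leqP k t) => hkt.
  have hvp : value t.+1 <= p_top t by rewrite hk.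
  have z_go : cell (positional k) t B true false = 0.
    by apply: cell_positional => //; rewrite hkt.
  by rewrite (max_l hvp) z_go z_late; ring.
have hpv : p_top t <= value t.+1 by rewrite ltW // ltNge hk // -ltnNge.
have z_stop : cell (positional k) t B true true = 0.
  by apply: cell_positional => //; rewrite leqNgt hkt.
by rewrite (max_r hpv) z_stop z_late; ring.
Qed.

(* At time 0 the strategy has not acted yet, so the bound is the same for
   all strategies. *)
Lemma win_bound_start s s' B : win_bound s 0 B = win_bound s' 0 B.
Proof. by []. Qed.

Lemma win_probE s : win_prob theta c N s = win_mass s 0 predT / Z.
Proof. by []. Qed.

End Game.

Theorem theorem3p8 (c : statistic) (N : nat) (R : realFieldType) (theta : R) :
  prefix_equivariant N c -> (1 <= N)%N -> (0 < theta)%R ->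
  exists k : nat, (k < N)%N /\
    forall s : strategy,
      (win_prob theta c N s <= win_prob theta c N (positional k))%R.
Proof.
case: N => [|n] hPE _ htheta //.
have [k hkN hk] := threshold_exists htheta c n.
exists k; split=> // s.
rewrite !(win_probE theta c) ler_pM2r ?invr_gt0 ?(mass_total_gt0 htheta) //.
rewrite (win_mass_positional htheta hPE hk (leq0n n)) // (win_bound_start _ _ _ s).
exact: win_mass_le.
Qed.
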